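(* For each $m \ge 2$ let $F_m \in \mathbb{R}^3$ be the vector of uniform expected payoffs of the imbalanced $(m,3)$-RPS. Then there exist vectors $u_m \in \mathbb{R}^3$ such that, for every $m$, $u_m$ majorizes the vector of uniform expected payoffs of every $(m,3)$-RPS game, and $\|F_m - u_m\| \to 0$ as $m \to \infty$ (indeed at an exponential rate of order $m(2/3)^{m}$).
   Context: An $(m,n)$-RPS game is a symmetric, zero-sum, win/lose game with $m$ players and $n$ pure strategies (''objects''), played without collusion. The rules assign to every multiset $c$ of $m$ chosen objects a single winning object $\phi(c)\in c$; every player who chose $\phi(c)$ wins and every other player loses. If there are $m'$ winners, each winner receives payoff $\frac{m-m'}{m'}$ and each loser receives payoff $-1$. The uniform expected payoff of an object $o$ is the expected payoff of a player who chooses $o$ while each of the other $m-1$ players independently chooses an object uniformly at random. The vector of uniform expected payoffs lists these values over all objects; majorization is the standard majorization order on vectors (comparing sorted partial sums, with equal total sums). The imbalanced $(m,3)$-RPS has objects $R,P,S$ with the following rules: any multiset containing at least one $S$ and at least one $R$ is won by $R$; any multiset containing only $R$'s and $P$'s (with at least one of each) is won by $P$; any multiset containing only $P$'s and $S$'s (with at least one of each) is won by $S$; a multiset consisting of a single object type is won by that object. *)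

From HB Require Import structures.
From mathcomp Require Import all_boot all_order all_algebra.
From mathcomp Require Import all_classical all_reals all_analysis.
Set Implicit Arguments. Unset Strict Implicit. Unset Printing Implicit Defensive.
Import Order.TTheory GRing.Theory Num.Theory.
Import numFieldNormedType.Exports.
Local Open Scope ring_scope.

(* A multiset of objects from 'I_n is represented by its multiplicity function. *)
Definition rps_mset (n : nat) := {ffun 'I_n -> nat}.

(* phi is the rule of an (m,n)-RPS game: to every multiset c of m objects it
   assigns a winning object phi c that occurs in c. (Values of phi on
   functions that are not multisets of size m are irrelevant.) *)
Definition is_RPS_rule (m n : nat) (phi : rps_mset n -> 'I_n) : Prop :=
  forall c : rps_mset n, (\sum_(i < n) c i)%N = m -> (0 < c (phi c))%N.

Definition payoff (R : realFieldType) (m n : nat) (phi : rps_mset n -> 'I_n)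
    (c : rps_mset n) (o : 'I_n) : R :=
  let w := phi c in
  let m' := c w in
  if w == o then (m%:R - m'%:R) / m'%:R else -1.

(* Multiset of choices when the other m-1 players play profile s and the
   player under consideration plays o. *)
Definition profile_mset (m n : nat) (s : {ffun 'I_m.-1 -> 'I_n}) (o : 'I_n)
  : rps_mset n :=
  [ffun o' => (#|[set i | s i == o']| + (o' == o))%N].

Definition unif_payoff (R : realFieldType) (m n : nat)
    (phi : rps_mset n -> 'I_n) : 'rV[R]_n :=
  \row_(o < n) ((\sum_(s : {ffun 'I_m.-1 -> 'I_n})
                   payoff R m phi (profile_mset s o) o) / (n%:R ^+ m.-1)).

Definition topsum (R : realFieldType) (n : nat) (x : 'rV[R]_n) (k : nat) : R :=
  \sum_(a <- take k (sort (fun a b : R => b <= a) [seq x 0 i | i <- enum 'I_n])) a.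

Definition majorizes (R : realFieldType) (n : nat) (x y : 'rV[R]_n) : Prop :=
  \sum_(i < n) x 0 i = \sum_(i < n) y 0 i /\
  forall k, (k <= n)%N -> topsum y k <= topsum x k.

Definition oR : 'I_3 := @Ordinal 3 0 isT.
Definition oP : 'I_3 := @Ordinal 3 1 isT.
Definition oS : 'I_3 := @Ordinal 3 2 isT.

Definition imbalanced_rule (c : rps_mset 3) : 'I_3 :=
  if (0 < c oR)%N && (0 < c oS)%N then oR
  else if (0 < c oP)%N then
    (if (0 < c oR)%N then oP
     else if (0 < c oS)%N then oS
     else oP)
  else if (0 < c oR)%N then oR
  else oS.

From HB Require Import structures.
From mathcomp Require Import all_boot all_order all_algebra perm.
From mathcomp Require Import all_classical all_reals all_analysis.
From mathcomp Require Import lra.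
Set Implicit Arguments. Unset Strict Implicit. Unset Printing Implicit Defensive.
Import Order.TTheory GRing.Theory Num.Theory.
Import numFieldNormedType.Exports.
Local Open Scope ring_scope.

(* Let A_m be the uniform expected payoff an object would get if it won every
   multiset containing it; by the symmetry between objects A_m does not depend
   on the object. In any (m,3)-RPS game every uniform payoff lies in [-1, A_m],
   and since the game is zero-sum and the m players are interchangeable, the
   three uniform payoffs sum to 0. For three-entry vectors with equal sums,
   majorization only compares largest and smallest entries, so
   u_m = (A_m, 1 - A_m, -1) majorizes every such payoff vector.
   In the imbalanced game R gets its winner payoff as soon as another player
   chose S, and S gets -1 as soon as another player chose R. Only profiles of
   the other m-1 players avoiding one object, of probability (2/3)^(m-1),
   contribute an error, of at most m+1, whence
   |F_m - u_m| <= (m+1) (2/3)^(m-1). *)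

Definition winner_payoff (R : realFieldType) (m c : nat) : R :=
  (m%:R - c%:R) / c%:R.

Lemma payoffE (R : realFieldType) m n (phi : rps_mset n -> 'I_n) c o :
  payoff R m phi c o = if phi c == o then winner_payoff R m (c o) else -1.
Proof. by rewrite /payoff; case: eqP => // ->. Qed.

Section ZeroSum.
Variables (R : realFieldType) (n : nat).

Definition choice_count k (t : {ffun 'I_k -> 'I_n}) : rps_mset n :=
  [ffun o => #|[set x | t x == o]|].

Lemma sum_choice_count k (t : {ffun 'I_k -> 'I_n}) :
  (\sum_o choice_count t o)%N = k.
Proof.
rewrite -[RHS]card_ord -sum1_card (partition_big t xpredT) //=.
by apply: eq_bigr => o _; rewrite ffunE cardsE -sum1_card.
Qed.

Lemma sum_by_choice k (t : {ffun 'I_k -> 'I_n}) (f : 'I_n -> R) :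
  \sum_j f (t j) = \sum_o (choice_count t o)%:R * f o.
Proof.
rewrite (partition_big t xpredT) //=; apply: eq_bigr => o _.
rewrite (eq_bigr (fun=> f o)) => [|j /eqP -> //].
by rewrite sumr_const ffunE cardsE mulr_natl.
Qed.

Lemma payoff_weighted_sum0 m (phi : rps_mset n -> 'I_n) (c : rps_mset n) :
  (\sum_o c o)%N = m -> (0 < c (phi c))%N ->
  \sum_o (c o)%:R * payoff R m phi c o = 0.
Proof.
move=> sum_c win_c; rewrite (bigD1 (phi c)) //= payoffE eqxx.
rewrite (eq_bigr (fun o => - (c o)%:R)) => [|o /negbTE]; last first.
  by rewrite payoffE eq_sym => ->; rewrite mulrN1.
have losers : (\sum_(o | o != phi c) c o)%N = (m - c (phi c))%N.
  by rewrite -sum_c [in RHS](bigD1 (phi c)) //= addKn.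
have win_le : (c (phi c) <= m)%N by rewrite -sum_c (bigD1 (phi c)) //= leq_addr.
rewrite sumrN -natr_sum losers natrB // /winner_payoff mulrCA mulfV ?mulr1
  ?subrr //.
by rewrite pnatr_eq0 -lt0n.
Qed.

Definition insert_choice k (j : 'I_k.+1) (o : 'I_n) (s : {ffun 'I_k -> 'I_n}) :
  {ffun 'I_k.+1 -> 'I_n} :=
  [ffun x => if unlift j x is Some i then s i else o].

Lemma choice_count_insert k j o (s : {ffun 'I_k -> 'I_n}) :
  choice_count (insert_choice j o s) = profile_mset (m := k.+1) s o.
Proof.
apply/ffunP => o'; rewrite !ffunE -!sum1_card [LHS]big_mkcond (bigD1_ord j) //.
rewrite [in RHS]big_mkcond addnC; congr (_ + _)%N.
  by rewrite inE ffunE unlift_none eq_sym; case: eqP.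
by apply: eq_bigr => i _; rewrite !inE ffunE liftK.
Qed.

Lemma sum_insert_choice k (j : 'I_k.+1) (G : {ffun 'I_k.+1 -> 'I_n} -> R) :
  \sum_o \sum_(s : {ffun 'I_k -> 'I_n}) G (insert_choice j o s) = \sum_t G t.
Proof.
rewrite pair_big /= [RHS](reindex (fun p => insert_choice j p.1 p.2)) //.
exists (fun t : {ffun _} => (t j, [ffun i => t (lift j i)])).
  move=> -[a s] _ /=; rewrite ffunE unlift_none; congr (_, _).
  by apply/ffunP => i; rewrite !ffunE liftK.
move=> t _; apply/ffunP => x; rewrite !ffunE.
by case: unliftP => [i ->|->]; rewrite ?ffunE.
Qed.

(* Each of the k.+1 players sees the same sum of payoffs over all profiles, so
   the total is the average over the players, which vanishes profile by
   profile. *)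
Lemma unif_payoff_sum0 k (phi : rps_mset n -> 'I_n) :
  is_RPS_rule k.+1 phi -> \sum_o unif_payoff R k.+1 phi 0 o = 0.
Proof.
move=> rule_phi; under eq_bigr do rewrite mxE; rewrite -mulr_suml.
set S := \sum_o _; suff -> : S = 0 by rewrite mul0r.
have playerE (j : 'I_k.+1) :
    S = \sum_t payoff R k.+1 phi (choice_count t) (t j).
  rewrite -(sum_insert_choice j); apply: eq_bigr => o _; apply: eq_bigr => s _.
  by rewrite choice_count_insert ffunE unlift_none.
apply: (@mulIf _ k.+1%:R); first by rewrite pnatr_eq0.
rewrite mul0r mulr_natr -[in S *+ _](card_ord k.+1) -sumr_const.
rewrite (eq_bigr _ (fun j _ => playerE j)) exchange_big big1 // => t _.
by rewrite sum_by_choice (payoff_weighted_sum0 (sum_choice_count t)) ?rule_phi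
  ?sum_choice_count.
Qed.

End ZeroSum.

Section PayoffBounds.
Variables (R : realFieldType) (m n : nat).

Lemma winner_payoff_geN1 c : -1 <= winner_payoff R m c.
Proof.
rewrite /winner_payoff; have [->|c_neq0] := eqVneq c 0%N.
  by rewrite invr0 mulr0 lerN10.
by rewrite mulrBl mulfV ?pnatr_eq0 // lerBrDl addrC addNr divr_ge0.
Qed.

Lemma winner_payoff_le c : (0 < c)%N -> winner_payoff R m c <= m%:R.
Proof.
move=> c_gt0; rewrite /winner_payoff ler_pdivrMr ?ltr0n //.
have : m%:R <= m%:R * c%:R :> R by rewrite ler_peMr ?ler1n.
by have := ler0n R c; lra.
Qed.

Lemma payoff_le_winner (phi : rps_mset n -> 'I_n) c o :
  payoff R m phi c o <= winner_payoff R m (c o).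
Proof. by rewrite payoffE; case: eqP => // _; apply: winner_payoff_geN1. Qed.

Lemma payoff_geN1 (phi : rps_mset n -> 'I_n) c o : -1 <= payoff R m phi c o.
Proof. by rewrite payoffE; case: eqP => // _; apply: winner_payoff_geN1. Qed.

Definition winner_mean (o : 'I_n) : R :=
  (\sum_(s : {ffun 'I_m.-1 -> 'I_n}) winner_payoff R m (profile_mset s o o))
    / n%:R ^+ m.-1.

Lemma winner_mean_indep x y : winner_mean x = winner_mean y.
Proof.
rewrite /winner_mean; congr (_ / _).
pose relabel (s : {ffun 'I_m.-1 -> 'I_n}) := [ffun i => tperm x y (s i)].
rewrite (reindex_inj (h := relabel)); last first.
  move=> s1 s2 /ffunP eq_s; apply/ffunP => i.
  by move: (eq_s i); rewrite !ffunE => /perm_inj.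
apply: eq_bigr => s _; rewrite !ffunE !eqxx; congr (winner_payoff _ _ (_ + _)%N).
apply: eq_card => i.
by rewrite !inE ffunE -[x in _ == x](tpermR x y) (inj_eq perm_inj).
Qed.

Lemma unif_payoff_le_winner_mean (phi : rps_mset n -> 'I_n) o :
  unif_payoff R m phi 0 o <= winner_mean o.
Proof.
have n_gt0 : (0 < n)%N by case: n o => [[]|].
rewrite mxE ler_pM2r ?invr_gt0 ?exprn_gt0 ?ltr0n //.
by apply: ler_sum => s _; apply: payoff_le_winner.
Qed.

Lemma unif_payoff_geN1 (phi : rps_mset n -> 'I_n) o :
  -1 <= unif_payoff R m phi 0 o.
Proof.
have n_gt0 : (0 < n)%N by case: n o => [[]|].
rewrite mxE ler_pdivlMr ?exprn_gt0 ?ltr0n //.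
have -> : -1 * n%:R ^+ m.-1 = \sum_(s : {ffun 'I_m.-1 -> 'I_n}) (-1 : R).
  by rewrite sumr_const card_ffun !card_ord mulN1r mulNrn natrX.
by apply: ler_sum => s _; apply: payoff_geN1.
Qed.

End PayoffBounds.

Section Majorization.
Variable R : realFieldType.

Lemma topsum0 n (x : 'rV[R]_n) : topsum x 0 = 0.
Proof. by rewrite /topsum take0 big_nil. Qed.

Lemma topsum_all n (x : 'rV[R]_n) : topsum x n = \sum_i x 0 i.
Proof.
rewrite /topsum take_oversize; last by rewrite size_sort size_map size_enum_ord.
rewrite (perm_big _ (permEl (perm_sort _ _))) big_map big_enum.
by apply: eq_bigl => i; rewrite inE.
Qed.

Lemma topsum_row3 (x : 'rV[R]_3) : exists imax imin : 'I_3,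
  [/\ topsum x 1 = x 0 imax, topsum x 2 = \sum_i x 0 i - x 0 imin,
      forall i, x 0 i <= x 0 imax & forall i, x 0 imin <= x 0 i].
Proof.
have := topsum_all x; rewrite /topsum.
set l := [seq x 0 i | i <- enum 'I_3].
have perm_l := permEl (perm_sort (fun a b : R => b <= a) l).
have sorted_l := sort_sorted (fun a b : R => le_total b a) l.
have size_l : size (sort (fun a b : R => b <= a) l) = 3.
  by rewrite size_sort size_map size_enum_ord.
have mem_l y : y \in sort (fun a b : R => b <= a) l -> exists i, y = x 0 i.
  by rewrite (perm_mem perm_l) => /mapP[i _ ->]; exists i.
have entry_l i : x 0 i \in sort (fun a b : R => b <= a) l.
  by rewrite (perm_mem perm_l) map_f ?mem_enum.
move: sorted_l size_l mem_l entry_l; case: sort => [|a [|b [|c []]]] //=.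
move=> /and3P[ba cb _] _ mem_l entry_l.
rewrite !big_cons !big_nil !addr0 => sum_x.
have [imax aE] := mem_l a (mem_head _ _).
have [imin cE] : exists i, c = x 0 i by apply: mem_l; rewrite !inE eqxx !orbT.
have ca := le_trans cb ba.
exists imax, imin; rewrite -aE -cE; split=> //.
- by rewrite -sum_x addrA addrK.
- by move=> i; have := entry_l i; rewrite !inE => /or3P[] /eqP ->.
- by move=> i; have := entry_l i; rewrite !inE => /or3P[] /eqP ->.
Qed.

Lemma majorizes_row3 (x y : 'rV[R]_3) :
  \sum_i x 0 i = \sum_i y 0 i ->
  (exists j, forall i, y 0 i <= x 0 j) -> (exists j, forall i, x 0 j <= y 0 i) ->
  majorizes x y.
Proof.
move=> sum_xy [jmax le_max] [jmin le_min]; split=> // -[|[|[|[|k]]]] // _.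
- by rewrite !topsum0.
- have [xmax [xmin [-> _ x_max _]]] := topsum_row3 x.
  have [ymax [ymin [-> _ _ _]]] := topsum_row3 y.
  exact: le_trans (le_max ymax) (x_max jmax).
- have [xmax [xmin [_ -> _ x_min]]] := topsum_row3 x.
  have [ymax [ymin [_ -> _ _]]] := topsum_row3 y.
  by rewrite sum_xy lerD2l lerN2 (le_trans (x_min jmin) (le_min ymin)).
- by rewrite !topsum_all sum_xy.
Qed.

End Majorization.

Lemma sum3 (V : nmodType) (F : 'I_3 -> V) : \sum_i F i = F oR + F oP + F oS.
Proof.
rewrite !big_ord_recl big_ord0 addr0 addrA.
by congr (F _ + F _ + F _); apply: val_inj.
Qed.

Lemma ord3P (i : 'I_3) : [\/ i = oR, i = oP | i = oS].
Proof.
case: i => [[|[|[|j]]] lt_i3] //.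
- by apply: Or31; apply: val_inj.
- by apply: Or32; apply: val_inj.
- by apply: Or33; apply: val_inj.
Qed.

Lemma mx_norm_le (K : realDomainType) m n (M : 'M[K]_(m, n)) b :
  0 <= b -> (forall i j, `|M i j| <= b) -> `|M| <= b.
Proof.
move=> b_ge0 M_le; rewrite /Num.Def.normr /= mx_normrE.
by apply: bigmax_le => // -[i j] _; apply: M_le.
Qed.

Lemma sum_ffun_avoiding_le (R : realFieldType) n k (x : 'I_n.+1)
    (f : {ffun 'I_k -> 'I_n.+1} -> R) b :
  (forall s, 0 <= f s <= b) ->
  (forall (s : {ffun 'I_k -> 'I_n.+1}) i, s i = x -> f s = 0) ->
  \sum_s f s <= b * (n ^ k)%:R.
Proof.
move=> f_bound f_hit; rewrite (bigID (mem (ffun_on (predC1 x)))) /=.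
rewrite [X in _ + X]big1 ?addr0 => [|s s_hits]; last first.
  have [i /eqP /f_hit // | no_hit] := pickP (fun i => s i == x).
  by case/negP: s_hits; apply/ffun_onP => i; rewrite !inE no_hit.
have -> : b * (n ^ k)%:R =
    \sum_(s : {ffun 'I_k -> 'I_n.+1} | s \in ffun_on (predC1 x)) b.
  by rewrite sumr_const card_ffun_on cardC1 !card_ord mulr_natr.
by apply: ler_sum => s _; case/andP: (f_bound s).
Qed.

Definition rps_bound (R : realFieldType) (m : nat) : 'rV[R]_3 :=
  \row_i (if i == oR then winner_mean R m oR
          else if i == oP then 1 - winner_mean R m oR else -1).

Lemma majorizes_rps_bound (R : realFieldType) k (phi : rps_mset 3 -> 'I_3) :
  is_RPS_rule k.+1 phi -> majorizes (rps_bound R k.+1) (unif_payoff R k.+1 phi).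
Proof.
move=> rule_phi; apply: majorizes_row3.
- by rewrite unif_payoff_sum0 // sum3 !mxE /=; lra.
- exists oR => i; rewrite [X in _ <= X]mxE /= -(winner_mean_indep _ _ i).
  exact: unif_payoff_le_winner_mean.
- by exists oS => i; rewrite mxE /= unif_payoff_geN1.
Qed.

Lemma imbalanced_rule_is_RPS m : (0 < m)%N -> is_RPS_rule m imbalanced_rule.
Proof.
move=> m_gt0 c sum_c; rewrite /imbalanced_rule.
case: (posnP (c oR)) => [cR0|cR_gt0]; case: (posnP (c oS)) => [cS0|cS_gt0];
  case: (posnP (c oP)) => [cP0|cP_gt0];
  rewrite ?cR0 ?cS0 ?cP0 /= ?cR_gt0 ?cS_gt0 ?cP_gt0 //.
suff : (\sum_i c i)%N = 0%N by rewrite sum_c => m0; rewrite m0 in m_gt0.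
by apply: big1 => i _; case: (ord3P i) => ->.
Qed.

Lemma profile_mset_self_gt0 k n (s : {ffun 'I_k -> 'I_n}) o :
  (0 < profile_mset (m := k.+1) s o o)%N.
Proof. by rewrite ffunE eqxx addn1. Qed.

Lemma profile_mset_gt0 k n (s : {ffun 'I_k -> 'I_n}) o i :
  (0 < profile_mset (m := k.+1) s o (s i))%N.
Proof. by rewrite ffunE ltn_addr //; apply/card_gt0P; exists i; rewrite inE. Qed.

Section ImbalancedGame.
Variables (R : realFieldType) (k : nat).
Local Notation prof := (@profile_mset k.+1 3).

Lemma imbalanced_rule_RS (c : rps_mset 3) :
  (0 < c oR)%N -> (0 < c oS)%N -> imbalanced_rule c = oR.
Proof. by rewrite /imbalanced_rule => -> ->. Qed.

Lemma imbalanced_gap_R :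
  winner_mean R k.+1 oR - unif_payoff R k.+1 imbalanced_rule 0 oR
    <= k.+2%:R * (2 / 3) ^+ k.
Proof.
rewrite mxE -mulrBl -sumrB expr_div_n mulrA ler_pM2r ?invr_gt0 ?exprn_gt0 //.
rewrite -natrX; apply: (sum_ffun_avoiding_le (x := oS)) => [s | s i s_i].
  have := payoff_le_winner R k.+1 imbalanced_rule (prof s oR) oR.
  have := payoff_geN1 R k.+1 imbalanced_rule (prof s oR) oR.
  have := winner_payoff_le R k.+1 (profile_mset_self_gt0 s oR).
  by rewrite -natr1; lra.
have sS : (0 < prof s oR oS)%N by rewrite -s_i profile_mset_gt0.
by rewrite payoffE imbalanced_rule_RS ?profile_mset_self_gt0 // eqxx subrr.
Qed.

Lemma imbalanced_gap_S :
  unif_payoff R k.+1 imbalanced_rule 0 oS + 1 <= k.+2%:R * (2 / 3) ^+ k.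
Proof.
have sum_le : \sum_(s : {ffun 'I_k -> 'I_3})
    (payoff R k.+1 imbalanced_rule (prof s oS) oS + 1) <= k.+2%:R * (2 ^ k)%:R.
  apply: (sum_ffun_avoiding_le (x := oR)) => [s | s i s_i].
    have := payoff_le_winner R k.+1 imbalanced_rule (prof s oS) oS.
    have := payoff_geN1 R k.+1 imbalanced_rule (prof s oS) oS.
    have := winner_payoff_le R k.+1 (profile_mset_self_gt0 s oS).
    by rewrite -natr1; lra.
  have sR : (0 < prof s oS oR)%N by rewrite -s_i profile_mset_gt0.
  by rewrite payoffE imbalanced_rule_RS ?profile_mset_self_gt0 //= addNr.
rewrite big_split /= sumr_const card_ffun !card_ord !natrX in sum_le.
have N_gt0 : 0 < 3%:R ^+ k :> R by rewrite exprn_gt0.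
rewrite mxE expr_div_n mulrA -(ler_pM2r N_gt0) mulrDl !divfK ?mul1r // ?lt0r_neq0.
Qed.

(* Both entry sums vanish, so the middle gap is controlled by the other two. *)
Lemma imbalanced_dist :
  `|unif_payoff R k.+1 imbalanced_rule - rps_bound R k.+1|
    <= k.+2%:R * (2 / 3) ^+ k.
Proof.
have gap_R := imbalanced_gap_R; have gap_S := imbalanced_gap_S.
have le_R := unif_payoff_le_winner_mean R k.+1 imbalanced_rule oR.
have ge_S := unif_payoff_geN1 R k.+1 imbalanced_rule oS.
have := unif_payoff_sum0 R (imbalanced_rule_is_RPS (ltn0Sn k)); rewrite sum3.
move: gap_R gap_S le_R ge_S; set F := unif_payoff _ _ _.
move=> gap_R gap_S le_R ge_S sum_F; apply: mx_norm_le => [|i j]; first by lra.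
clearbody F; rewrite (ord1 i) !mxE ler_norml.
by case: (ord3P j) => -> /=; apply/andP; split; lra.
Qed.

End ImbalancedGame.

Lemma imbalanced_dist_le (R : realFieldType) m : (0 < m)%N ->
  `|unif_payoff R m imbalanced_rule - rps_bound R m| <= 3 * m%:R * (2 / 3) ^+ m.
Proof.
case: m => // k _; apply: le_trans (imbalanced_dist R k) _.
have q_ge0 : 0 <= (2 / 3 : R) ^+ k by rewrite exprn_ge0.
have kS : k.+1%:R = k%:R + 1 :> R by rewrite -addn1 natrD.
have kSS : k.+2%:R = k%:R + 2 :> R by rewrite -addn2 natrD.
rewrite exprS kS kSS; have := mulr_ge0 (ler0n R k) q_ge0; nra.
Qed.

Lemma natr_le_expr_5_4 (R : realFieldType) n : n%:R <= 4 * (5 / 4 : R) ^+ n.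
Proof.
elim: n => [|n IH]; first by rewrite expr0 mulr1 ler0n.
have q_ge1 : 1 <= (5 / 4 : R) ^+ n by rewrite exprn_ege1 //; lra.
by rewrite exprS -[n.+1]addn1 natrD; lra.
Qed.

Lemma natr_mul_expr_2_3_le (R : realFieldType) n :
  3 * n%:R * (2 / 3 : R) ^+ n <= 12 * (5 / 6) ^+ n.
Proof.
have -> : (5 / 6 : R) ^+ n = (5 / 4) ^+ n * (2 / 3) ^+ n.
  by rewrite -exprMn; congr (_ ^+ _); lra.
rewrite mulrA ler_pM2r; last by rewrite exprn_gt0 //; lra.
by have := natr_le_expr_5_4 R n; lra.
Qed.

Local Open Scope classical_set_scope.

Theorem mainTheorem2 (R : realType) :
  exists u : nat -> 'rV[R]_3,
    (forall m : nat, (2 <= m)%N ->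
       forall phi : rps_mset 3 -> 'I_3, is_RPS_rule m phi ->
         majorizes (u m) (unif_payoff R m phi)) /\
    ((fun m : nat => `|unif_payoff R m imbalanced_rule - u m|) @ \oo --> (0 : R)) /\
    (exists C : R, forall m : nat, (2 <= m)%N ->
       `|unif_payoff R m imbalanced_rule - u m| <= C * m%:R * ((2 : R) / 3) ^+ m).
Proof.
exists (rps_bound R); split; [|split].
- by case=> // k _ phi; apply: majorizes_rps_bound.
- apply: (squeeze_cvgr (f := fun=> 0) (h := geometric 12 (5 / 6 : R))).
  + exists 1%N => // m /= m_gt0; rewrite normr_ge0 /=.
    exact: le_trans (imbalanced_dist_le R m_gt0) (natr_mul_expr_2_3_le R m).
  + exact: cvg_cst.
  + by apply: cvg_geometric; rewrite ger0_norm; lra.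
- by exists 3 => m m_ge2; apply: imbalanced_dist_le; apply: ltnW.
Qed.
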